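(* For every instance $(A,C,k)$, every committee $W$ that the Method of Equal Shares (MES) can output (under any tie-breaking), and every AV-completion $\overline{W}$ of $W$, the utilitarian ratio of $\overline{W}$ is at least $\frac{2}{\sqrt{k}}-\frac2k$.
   Context: An instance $(A,C,k)$ consists of a finite nonempty candidate set $C$, voters $N=\{1,\dots,n\}$, approval sets $A_i\subseteq C$, and a committee size $1\le k\le|C|$. $N_c=\{i: c\in A_i\}$. $\mathrm{sw}(W)=\sum_i|A_i\cap W|$; the utilitarian ratio of $W$ is $\mathrm{sw}(W)/\max\{\mathrm{sw}(W'):|W'|=k\}$. MES starts with $W=\emptyset$ and budgets $b_i=k/n$ for all $i\in N$. In each round, for each $c\in C\setminus W$ it determines the value $\rho\ge0$ (if any) with $\sum_{i\in N_c}\min(b_i,\rho)=1$; if no unselected candidate has such a $\rho$, MES terminates and outputs $W$; otherwise it adds a candidate $c$ with minimum $\rho$ (ties arbitrary) to $W$ and sets $b_i\leftarrow b_i-\min(b_i,\rho)$ for each $i\in N_c$. An AV-completion of $W$ is $W\cup T$ with $T\subseteq C\setminus W$, $|T|=k-|W|$, maximizing $\sum_{c\in T}|N_c|$. *)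

From HB Require Import structures.
From mathcomp Require Import all_boot all_order all_algebra.
Set Implicit Arguments. Unset Strict Implicit. Unset Printing Implicit Defensive.
Import Order.TTheory GRing.Theory Num.Theory.
Local Open Scope ring_scope.

Section MES.
Variables (R : rcfType) (C : finType) (n : nat) (A : 'I_n -> {set C}) (k : nat).

Definition supporters (c : C) : {set 'I_n} := [set i | c \in A i].

Definition sw (W : {set C}) : nat := (\sum_(i < n) #|A i :&: W|)%N.

Definition opt_sw : nat := (\max_(W' : {set C} | #|W'| == k) sw W')%N.

Definition util_ratio (W : {set C}) : R := (sw W)%:R / (opt_sw)%:R.

Definition rho_ok (b : 'I_n -> R) (c : C) (rho : R) : Prop :=
  0 <= rho /\ \sum_(i in supporters c) Num.min (b i) rho = 1.

Definition mes_choice (W : {set C}) (b : 'I_n -> R) (c : C) (rho : R) : Prop :=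
  c \notin W /\ rho_ok b c rho /\
  (forall c' rho', c' \notin W -> rho_ok b c' rho' -> rho <= rho').

Definition mes_pay (b : 'I_n -> R) (c : C) (rho : R) : 'I_n -> R :=
  fun i => if c \in A i then b i - Num.min (b i) rho else b i.

Inductive mes_reach : {set C} -> ('I_n -> R) -> Prop :=
| mes_init : mes_reach set0 (fun _ => k%:R / n%:R)
| mes_step W b c rho :
    mes_reach W b -> mes_choice W b c rho ->
    mes_reach (c |: W) (mes_pay b c rho).

Definition mes_output (W : {set C}) : Prop :=
  exists b, mes_reach W b /\
    (forall c, c \notin W -> forall rho, ~ rho_ok b c rho).

Definition av_completion (W Wbar : {set C}) : Prop :=
  exists T : {set C},
    [/\ T \subset ~: W, #|T| = (k - #|W|)%N,
        (forall T' : {set C}, T' \subset ~: W -> #|T'| = (k - #|W|)%N ->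
           (\sum_(c in T') #|supporters c| <= \sum_(c in T) #|supporters c|)%N)
      & Wbar = W :|: T].

End MES.

From HB Require Import structures.
From mathcomp Require Import all_boot all_order all_algebra.
From mathcomp Require Import ring lra zify.
Set Implicit Arguments. Unset Strict Implicit. Unset Printing Implicit Defensive.
Import Order.TTheory GRing.Theory Num.Theory.
Local Open Scope ring_scope.

(* Let y = n/k.  MES only buys candidates with at least y supporters, since
   fewer voters cannot pay 1 out of budgets k/n.  Fix an unselected candidate
   c0 with x >= y supporters and, for each supporter i of c0, its capped
   spending min(x k/n - 1, x (k/n - b_i)).  While every supporter of c0 holds
   at least 1/x, c0 is affordable at price 1/x, so each purchase costs every
   voter at most 1/x and has at least x supporters; once some supporter holds
   less than 1/x, its capped spending is at its maximum.  Hence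
   y |W| + (x - y) (capped spending) never exceeds sum_{c in W} min(|N_c|, x),
   and as c0 is unaffordable at the end, y |W| + (x - y)(x k/n - 1) is bounded
   by that sum; a sum of squares shows that this is at least beta |W| x with
   beta = 2/sqrt k - 2/k.  With x maximal among unselected candidates, the
   members of an optimal committee outside W are dominated by the AV-completion
   plus x per extra seat, and those inside W by (1 - beta) |N_c| + beta x. *)

Lemma sw_sum_supporters (C : finType) (n : nat) (A : 'I_n -> {set C}) (W : {set C}) :
  sw A W = (\sum_(c in W) #|supporters A c|)%N.
Proof.
rewrite /sw (eq_bigr (fun i => \sum_(c in W) (c \in A i) : nat)%N) => [|i _].
  rewrite exchange_big; apply: eq_bigr => c _.
  by rewrite -sum1_card [RHS]big_mkcond; apply: eq_bigr => i _; rewrite inE.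
rewrite -sum1_card big_mkcond [RHS]big_mkcond; apply: eq_bigr => c _.
by rewrite inE andbC; case: (c \in W); case: (c \in A i).
Qed.

Lemma voters_gt0_of_opt_sw (C : finType) (n : nat) (A : 'I_n -> {set C}) (k : nat) :
  (0 < opt_sw A k)%N -> (0 < n)%N.
Proof.
move=> opt_gt0; rewrite lt0n; apply: contraTneq opt_gt0 => n0; rewrite -leqNgt.
apply/bigop.bigmax_leqP => W _; rewrite /sw big1 // => i _.
by have := ltn_ord i; rewrite [X in (_ < X)%N]n0 ltn0.
Qed.

Lemma exists_subset_card (T : finType) (S : {set T}) (m : nat) :
  (m <= #|S|)%N -> exists2 B : {set T}, B \subset S & #|B| = m.
Proof.
case/card_geqP=> s [s_uniq s_size sS]; exists [set x in s].
  by apply/subsetP=> x; rewrite inE => /sS.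
by rewrite cardsE (card_uniqP s_uniq).
Qed.

Lemma opt_sw_attained (C : finType) (n : nat) (A : 'I_n -> {set C}) (k : nat) :
  (k <= #|C|)%N -> exists2 Ws : {set C}, #|Ws| = k & opt_sw A k = sw A Ws.
Proof.
rewrite -cardsT => /exists_subset_card[B _ /eqP cardB].
rewrite /opt_sw (bigop.bigmax_eq_arg B cardB).
by case: arg_maxnP => // Ws /eqP cardWs _; exists Ws.
Qed.

Lemma sum_le_max_subset (T : finType) (f : T -> nat) (S X D : {set T}) (m x : nat) :
  #|X| = m ->
  (forall Y : {set T}, Y \subset S -> #|Y| = m ->
     \sum_(c in Y) f c <= \sum_(c in X) f c)%N ->
  D \subset S -> (m <= #|D|)%N -> {in S, forall c, f c <= x}%N ->
  (\sum_(c in D) f c + m * x <= \sum_(c in X) f c + #|D| * x)%N.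
Proof.
move=> cardX X_max sDS leD le_x.
have [U sUD cardU] := exists_subset_card leD.
have U_le : (\sum_(c in U) f c <= \sum_(c in X) f c)%N.
  exact: X_max (subset_trans sUD sDS) cardU.
have rest_le : (\sum_(c in D :\: U) f c <= #|D :\: U| * x)%N.
  rewrite -sum_nat_const; apply: leq_sum => c; rewrite inE => /andP[_ cD].
  exact/le_x/(subsetP sDS).
rewrite (big_setID U) -(cardsID U D) /= (setIidPr sUD) cardU; lia.
Qed.

Lemma min_le_convex_comb (R : realDomainType) (a x beta : R) :
  0 <= beta <= 1 -> Num.min a x <= (1 - beta) * a + beta * x.
Proof.
by case/andP=> beta_ge0 beta_le1; case: (lerP a x) => le_ax; nra.
Qed.

Lemma av_completion_welfare_ge (R : realDomainType) (C : finType) (n : nat)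
    (A : 'I_n -> {set C}) (k : nat) (W Wbar Ws : {set C}) (x : nat) (beta : R) :
  (#|W| <= k)%N -> #|Ws| = k -> av_completion A k W Wbar ->
  {in ~: W, forall c, #|supporters A c| <= x}%N -> 0 <= beta <= 1 ->
  beta * #|W|%:R * x%:R <= \sum_(c in W) Num.min (#|supporters A c|%:R) x%:R ->
  beta * (sw A Ws)%:R <= (sw A Wbar)%:R.
Proof.
move=> le_Wk cardWs [T [sTW cardT T_max ->]] le_x beta01.
have /andP[beta_ge0 beta_le1] := beta01.
set s := fun c => (#|supporters A c|%:R : R).
set a := \sum_(c in W :&: Ws) s c; set o := \sum_(c in W :\: Ws) s c.
set d := \sum_(c in Ws :\: W) s c; set t := \sum_(c in T) s c.
set j := #|W :&: Ws|.
have sw_Ws : (sw A Ws)%:R = a + d.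
  by rewrite sw_sum_supporters natr_sum (big_setID W) setIC.
have sw_Wbar : (sw A (W :|: T))%:R = a + o + t.
  have disjWT : [disjoint W & T] by rewrite disjoint_sym disjoints_subset.
  rewrite sw_sum_supporters natr_sum (eq_bigl [predU W & T]) => [|c]; last by rewrite !inE.
  by rewrite bigU // (big_setID Ws).
have le_jW : (j <= #|W|)%N by rewrite subset_leq_card ?subsetIl.
have exchange : d + (k - #|W|)%:R * x%:R <= t + (k - j)%:R * x%:R.
  have sDW : Ws :\: W \subset ~: W by rewrite setDE subsetIr.
  have cardD : #|Ws :\: W| = (k - j)%N by rewrite cardsD cardWs setIC.
  have le_D : (k - #|W| <= #|Ws :\: W|)%N by rewrite cardD; lia.
  have := sum_le_max_subset cardT T_max sDW le_D le_x.
  by rewrite cardD -(ler_nat R) !natrD !natrM !natr_sum.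
have min_in : \sum_(c in W :&: Ws) Num.min (s c) x%:R <= (1 - beta) * a + beta * x%:R * j%:R.
  apply: le_trans (_ : _ <= \sum_(c in W :&: Ws) ((1 - beta) * s c + beta * x%:R)) _.
    by apply: ler_sum => c _; exact: min_le_convex_comb.
  by rewrite big_split /= -mulr_sumr sumr_const -[_ *+ #|_|]mulr_natr.
have min_out : \sum_(c in W :\: Ws) Num.min (s c) x%:R <= o.
  by apply: ler_sum => c _; rewrite ge_min lexx.
rewrite (big_setID Ws) /= sw_Ws sw_Wbar => sum_min.
have t_ge0 : 0 <= t by apply: sumr_ge0 => c _; rewrite ler0n.
have := ler_wpM2l beta_ge0 exchange.
have le_jk : (j <= k)%N by lia.
rewrite (natrB _ le_Wk) (natrB _ le_jk); nra.
Qed.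

Definition mes_guarantee (R : fieldType) (q : R) : R := 2 / q - 2 / (q * q).

Lemma mes_guarantee_bounds (R : realFieldType) (q : R) :
  1 <= q -> 0 <= mes_guarantee q <= 1.
Proof.
move=> q_ge1; have q_gt0 : 0 < q by lra.
have -> : mes_guarantee q = (2 * q - 2) / (q * q).
  by rewrite /mes_guarantee; field; rewrite gt_eqF.
have qq_gt0 : 0 < q * q by rewrite mulr_gt0.
by rewrite divr_ge0 ?ler_pdivrMr ?mul1r; nra.
Qed.

Lemma mes_guarantee_mul_le (R : realFieldType) (q l x y : R) :
  0 < q -> 0 < y -> 0 <= l <= q * q ->
  mes_guarantee q * l * x <= y * l + (x - y) * (x / y - 1).
Proof.
move=> q_gt0 y_gt0 /andP[l_ge0 l_le].
rewrite -subr_ge0.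
have -> : y * l + (x - y) * (x / y - 1) - mes_guarantee q * l * x
    = (l * ((q * y - x) ^+ 2 + y ^+ 2) + (q * q - l) * (x - y) ^+ 2) / (y * (q * q)).
  by rewrite /mes_guarantee; field; rewrite !gt_eqF.
apply: divr_ge0; last by rewrite ltW ?mulr_gt0.
have sqrs_ge0 : 0 <= (q * y - x) ^+ 2 + y ^+ 2 by rewrite addr_ge0 ?sqr_ge0.
by apply: addr_ge0; apply: mulr_ge0; rewrite ?sqr_ge0 ?subr_ge0.
Qed.

Section MESRun.
Variables (R : rcfType) (C : finType) (n : nat) (A : 'I_n -> {set C}) (k : nat).
Hypotheses (n_gt0 : (0 < n)%N) (k_gt0 : (0 < k)%N).

Local Notation share := (k%:R / n%:R : R).
Local Notation quota := (n%:R / k%:R : R).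
Local Notation supp c := (#|supporters A c|%:R : R).

Definition mes_stuck (W : {set C}) (b : 'I_n -> R) : Prop :=
  forall c, c \notin W -> forall rho, ~ rho_ok A b c rho.

Lemma share_gt0 : 0 < share. Proof. by rewrite divr_gt0 ?ltr0n. Qed.

Lemma quota_gt0 : 0 < quota. Proof. by rewrite divr_gt0 ?ltr0n. Qed.

Lemma mes_payE (b : 'I_n -> R) c (rho : R) i :
  mes_pay A b c rho i = b i - (if c \in A i then Num.min (b i) rho else 0).
Proof. by rewrite /mes_pay; case: ifP; rewrite ?subr0. Qed.

Lemma mes_pay_ge (b : 'I_n -> R) c (rho : R) i : 0 <= rho -> b i - rho <= mes_pay A b c rho i.
Proof.
move=> rho_ge0; rewrite mes_payE lerD2l lerN2.
by case: ifP => _; rewrite ?ge_min ?lexx ?orbT.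
Qed.

Lemma mes_pay_bounds (b : 'I_n -> R) c (rho : R) i :
  0 <= rho -> 0 <= b i -> 0 <= mes_pay A b c rho i <= b i.
Proof.
move=> rho_ge0 bi_ge0; rewrite mes_payE.
case: ifP => _; last by rewrite subr0 lexx andbT.
by case: (lerP (b i) rho) => cmp; apply/andP; split; lra.
Qed.

Lemma sum_mes_pay (b : 'I_n -> R) c (rho : R) :
  rho_ok A b c rho -> \sum_i mes_pay A b c rho i = \sum_i b i - 1.
Proof.
move=> [_ sum1]; under eq_bigr => i _ do rewrite mes_payE.
rewrite sumrB -sum1; congr (_ - _).
by rewrite [RHS]big_mkcond; apply: eq_bigr => i _; rewrite inE.
Qed.

Lemma rho_ok_inv_le_supp (b : 'I_n -> R) c (rho : R) p : rho_ok A b c rho -> 0 < p ->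
  {in supporters A c, forall i, Num.min (b i) rho <= p} -> p^-1 <= supp c.
Proof.
move=> [_ sum1] p_gt0 le_p.
have : \sum_(i in supporters A c) Num.min (b i) rho <= \sum_(i in supporters A c) p.
  exact: ler_sum.
by rewrite sum1 sumr_const -div1r ler_pdivrMr // mulr_natl.
Qed.

Lemma mes_reach_budget W (b : 'I_n -> R) : mes_reach A k W b -> forall i, 0 <= b i <= share.
Proof.
elim=> [|W' b' c rho _ IH [_ [[rho_ge0 _] _]]] i.
  by rewrite lexx ltW ?share_gt0.
have /andP[b_ge0 b_le] := IH i.
have /andP[pay_ge0 pay_le] := mes_pay_bounds c rho_ge0 b_ge0.
by rewrite pay_ge0 (le_trans pay_le).
Qed.

Lemma mes_reach_budget_sum W (b : 'I_n -> R) :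
  mes_reach A k W b -> \sum_i b i = k%:R - #|W|%:R.
Proof.
elim=> [|W' b' c rho _ IH [cW' [ok_c _]]].
  rewrite sumr_const card_ord cards0 subr0 -[_ *+ n]mulr_natr.
  by rewrite divfK // pnatr_eq0 -lt0n.
by rewrite sum_mes_pay // IH cardsU1 cW' add1n -nat1r; lra.
Qed.

Lemma mes_reach_card_le W (b : 'I_n -> R) : mes_reach A k W b -> (#|W| <= k)%N.
Proof.
move=> reach; rewrite -(ler_nat R) -subr_ge0 -(mes_reach_budget_sum reach).
by apply: sumr_ge0 => i _; case/andP: (mes_reach_budget reach i).
Qed.

Lemma mes_choice_quota_le W (b : 'I_n -> R) c (rho : R) :
  mes_reach A k W b -> mes_choice A W b c rho -> quota <= supp c.
Proof.
move=> reach [_ [ok_c _]]; rewrite -invf_div.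
apply: (rho_ok_inv_le_supp ok_c share_gt0) => i _.
have /andP[_ bi_le] := mes_reach_budget reach i.
by apply: le_trans bi_le; rewrite ge_min lexx.
Qed.

Lemma mes_reach_quota_le_supp W (b : 'I_n -> R) c :
  mes_reach A k W b -> c \in W -> quota <= supp c.
Proof.
elim=> [|W' b' c' rho reach IH choice]; first by rewrite inE.
by rewrite in_setU1 => /orP[/eqP -> | /IH //]; exact: mes_choice_quota_le choice.
Qed.

Definition capped_spending (x : R) (b : 'I_n -> R) (i : 'I_n) : R :=
  Num.min (x * share - 1) (x * (share - b i)).

Section Unselected.
Variable c0 : C.
Hypothesis quota_le_c0 : quota <= supp c0.
Local Notation x := (supp c0).

Let x_quota_ge0 : 0 <= x - quota. Proof. by rewrite subr_ge0. Qed.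

Lemma supp_c0_gt0 : 0 < x.
Proof. exact: lt_le_trans quota_gt0 quota_le_c0. Qed.

Lemma rho_ok_c0_or_poor (b : 'I_n -> R) :
  rho_ok A b c0 x^-1 \/ exists2 j, j \in supporters A c0 & b j < x^-1.
Proof.
have x_neq0 : x != 0 := lt0r_neq0 supp_c0_gt0.
case: (boolP [forall j in supporters A c0, x^-1 <= b j]) => [/forall_inP rich | ].
  left; split; first by rewrite invr_ge0 ltW ?supp_c0_gt0.
  rewrite (eq_bigr (fun=> x^-1)) => [|j /rich]; last by move=> ?; rewrite min_r.
  by rewrite sumr_const -[_ *+ _]mulr_natr mulVf.
by rewrite negb_forall_in => /exists_inP[j j_c0 poor]; right; exists j; rewrite // ltNge.
Qed.

Lemma capped_spending_poor (b : 'I_n -> R) j :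
  b j < x^-1 -> capped_spending x b j = x * share - 1.
Proof.
move=> poor; rewrite /capped_spending min_l // mulrBr lerD2l lerN2.
have := ler_wpM2l (ltW supp_c0_gt0) (ltW poor).
by rewrite mulfV // lt0r_neq0 ?supp_c0_gt0.
Qed.

Lemma capped_spending_pay (b : 'I_n -> R) c (rho : R) i : 0 <= rho <= x^-1 ->
  capped_spending x (mes_pay A b c rho) i <= capped_spending x b i + 1.
Proof.
case/andP=> rho_ge0 rho_le; have x_gt0 := supp_c0_gt0.
have x_rho : x * rho <= 1.
  by have := ler_wpM2l (ltW x_gt0) rho_le; rewrite mulfV // lt0r_neq0.
have := ler_wpM2l (ltW x_gt0) (mes_pay_ge b c i rho_ge0).
rewrite /capped_spending !mulrBr => pay_ge.
set s := x * share; set p := x * mes_pay A b c rho i in pay_ge *.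
by case: (lerP (s - 1) (s - p)); case: (lerP (s - 1) (s - x * b i)) => *; lra.
Qed.

Definition capped_invariant (W : {set C}) (b : 'I_n -> R) : Prop :=
  forall i, i \in supporters A c0 ->
  quota * #|W|%:R + (x - quota) * capped_spending x b i
    <= \sum_(c in W) Num.min (supp c) x.

Lemma capped_invariant0 : capped_invariant set0 (fun=> share).
Proof.
move=> i _; rewrite big_set0 cards0 mulr0 add0r /capped_spending subrr mulr0.
by rewrite mulr_ge0_le0 ?subr_ge0 // ge_min lexx orbT.
Qed.

Lemma capped_invariant_affordable (W : {set C}) (b : 'I_n -> R) c (rho : R) :
  c0 \notin W -> capped_invariant W b -> mes_choice A W b c rho ->
  rho_ok A b c0 x^-1 -> capped_invariant (c |: W) (mes_pay A b c rho).
Proof.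
move=> c0W inv [cW [ok_c rho_min]] ok_c0 i i_c0.
have rho_le : rho <= x^-1 := rho_min c0 _ c0W ok_c0.
have x_le : x <= supp c.
  rewrite -[x]invrK; apply: (rho_ok_inv_le_supp ok_c); first by rewrite invr_gt0 supp_c0_gt0.
  by move=> j _; apply: le_trans rho_le; rewrite ge_min lexx orbT.
have rho01 : 0 <= rho <= x^-1 by rewrite ok_c.1.
have := ler_wpM2l x_quota_ge0 (capped_spending_pay b c i rho01).
rewrite big_setU1 //= (min_r x_le) cardsU1 cW add1n -nat1r.
have := inv i i_c0; lra.
Qed.

Lemma capped_invariant_poor (W : {set C}) (b : 'I_n -> R) c (rho : R) j :
  capped_invariant W b -> c \notin W -> quota <= supp c ->
  j \in supporters A c0 -> b j < x^-1 -> capped_invariant (c |: W) (mes_pay A b c rho).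
Proof.
move=> inv cW quota_le_c j_c0 poor i _.
have := inv j j_c0; rewrite capped_spending_poor // => inv_j.
have capped_le : capped_spending x (mes_pay A b c rho) i <= x * share - 1.
  by rewrite /capped_spending ge_min lexx.
have := ler_wpM2l x_quota_ge0 capped_le.
have : quota <= Num.min (supp c) x by rewrite le_min quota_le_c quota_le_c0.
rewrite big_setU1 //= cardsU1 cW add1n -nat1r; lra.
Qed.

Lemma mes_reach_capped_invariant (W : {set C}) (b : 'I_n -> R) :
  mes_reach A k W b -> c0 \notin W -> capped_invariant W b.
Proof.
elim=> [|W' b' c rho reach IH choice]; first by move=> _; exact: capped_invariant0.
rewrite in_setU1 negb_or => /andP[_ c0W']; have [cW' _] := choice.
case: (rho_ok_c0_or_poor b') => [ok_c0 | [j j_c0 poor]].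
  exact: capped_invariant_affordable (IH c0W') choice ok_c0.
exact: capped_invariant_poor (IH c0W') cW' (mes_choice_quota_le reach choice) j_c0 poor.
Qed.

Lemma mes_output_capped_bound (W : {set C}) (b : 'I_n -> R) :
  mes_reach A k W b -> mes_stuck W b ->
  c0 \notin W ->
  quota * #|W|%:R + (x - quota) * (x * share - 1) <= \sum_(c in W) Num.min (supp c) x.
Proof.
move=> reach stuck c0W.
case: (rho_ok_c0_or_poor b) => [/(stuck c0 c0W) [] | [j j_c0 poor]].
by rewrite -(capped_spending_poor poor); exact: mes_reach_capped_invariant.
Qed.

End Unselected.

Lemma mes_output_sum_min_ge (W : {set C}) (b : 'I_n -> R) c0 (q : R) :
  mes_reach A k W b -> mes_stuck W b -> c0 \notin W -> 1 <= q -> q * q = k%:R ->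
  mes_guarantee q * #|W|%:R * supp c0
    <= \sum_(c in W) Num.min (supp c) (supp c0).
Proof.
move=> reach stuck c0W q_ge1 qq.
have /andP[beta_ge0 beta_le1] := mes_guarantee_bounds q_ge1.
have [quota_le | lt_quota] := lerP quota (supp c0).
  apply: le_trans (mes_output_capped_bound quota_le reach stuck c0W).
  have W_le : 0 <= (#|W|%:R : R) <= q * q.
    by rewrite qq ler0n ler_nat (mes_reach_card_le reach).
  have q_gt0 : 0 < q := lt_le_trans ltr01 q_ge1.
  by have := mes_guarantee_mul_le (supp c0) q_gt0 quota_gt0 W_le; rewrite invf_div.
rewrite (eq_bigr (fun=> supp c0)) => [|c cW]; last first.
  by rewrite min_r // ltW // (lt_le_trans lt_quota) // (mes_reach_quota_le_supp reach cW).
rewrite sumr_const -[_ *+ _]mulr_natl.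
have : 0 <= #|W|%:R * supp c0 :> R by rewrite mulr_ge0 ?ler0n.
nra.
Qed.

Lemma mes_output_sum_min_max_ge (W : {set C}) (b : 'I_n -> R) (q : R) :
  mes_reach A k W b -> mes_stuck W b ->
  1 <= q -> q * q = k%:R ->
  mes_guarantee q * #|W|%:R * (\max_(c in ~: W) #|supporters A c|)%N%:R
    <= \sum_(c in W) Num.min (supp c) (\max_(c in ~: W) #|supporters A c|)%N%:R.
Proof.
move=> reach stuck q_ge1 qq; set xmax := (\max_(c in ~: W) _)%N.
have [-> | xmax_gt0] := posnP xmax.
  by rewrite mulr0; apply: sumr_ge0 => c _; rewrite le_min !ler0n.
have nonempty : (0 < #|~: W|)%N.
  move: xmax_gt0; rewrite !lt0n; apply: contraNneq => /card0_eq empty.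
  by rewrite /xmax big_pred0.
have [c0 c0W xmaxE] := eq_bigmax_cond (fun c => #|supporters A c|) nonempty.
rewrite inE in c0W; rewrite /xmax xmaxE.
exact: mes_output_sum_min_ge reach stuck c0W q_ge1 qq.
Qed.

End MESRun.

Theorem theorem4 (R : rcfType) (C : finType) (n : nat) (A : 'I_n -> {set C})
    (k : nat) (hk1 : (1 <= k)%N) (hkC : (k <= #|C|)%N)
    (hopt : (0 < opt_sw A k)%N)
    (W Wbar : {set C}) :
  mes_output R A k W -> av_completion A k W Wbar ->
  2 / Num.sqrt (k%:R : R) - 2 / k%:R <= util_ratio R A k Wbar.
Proof.
move=> [b [reach stuck]] completion.
have n_gt0 := voters_gt0_of_opt_sw hopt.
have [Ws card_Ws opt_Ws] := opt_sw_attained A hkC.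
set q := Num.sqrt (k%:R : R).
have qq : q * q = k%:R by rewrite -expr2 sqr_sqrtr ?ler0n.
have q_ge1 : 1 <= q by rewrite -sqrtr1 ler_sqrt ?ler1n.
rewrite -[X in _ - 2 / X]qq -/(mes_guarantee q) /util_ratio opt_Ws.
rewrite ler_pdivlMr; last by rewrite ltr0n -opt_Ws.
set xmax := (\max_(c in ~: W) #|supporters A c|)%N.
apply: (av_completion_welfare_ge (x := xmax) _ card_Ws completion).
- exact: (mes_reach_card_le n_gt0 hk1 reach).
- by move=> c cW; apply: leq_bigmax_cond.
- exact: mes_guarantee_bounds.
- exact: (mes_output_sum_min_max_ge n_gt0 hk1 reach stuck q_ge1 qq).
Qed.
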